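(* Let $\mathcal{X}$ be a connected $n$-premaniplex with base flag $x_0$ and $N=\operatorname{Stab}_{\mathcal{C}^n}(x_0)$, and let $(\mathcal{Y},\eta)$ be an $(n,m)$-voltage operator that preserves connectivity, with base flag $y_0$ of $\mathcal{Y}$, $L=\operatorname{Stab}_{\mathcal{C}^m}(y_0)$ and $\zeta:L\to\mathcal{C}^n$, $\zeta(\omega)=\eta(W_\omega(y_0))$. For $\upsilon\in\mathcal{C}^m$ let $\mathcal{Z}_\upsilon=\mathcal{C}^n/\zeta(L\cap L^\upsilon)$. If for every $\upsilon\in\mathcal{C}^m\setminus L$ the premaniplex $\mathcal{X}$ does not cover $\mathcal{Z}_\upsilon$, then every automorphism $\gamma$ of $\mathcal{X}\rtimes_\eta\mathcal{Y}$ is induced by an automorphism of $\mathcal{X}$, i.e. there is $\alpha\in\operatorname{Aut}(\mathcal{X})$ with $(x,y)\gamma=(x\alpha,y)$ for all $(x,y)$.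
   Context: An $n$-premaniplex is an edge-coloured graph (semi-edges and parallel edges allowed) with colours $\{0,\dots,n-1\}$ such that every vertex (flag) is the start of exactly one dart of each colour, and for $|i-j|\ge2$ alternating $i,j$-paths of length 4 are closed; $x^i$ is the $i$-adjacent flag of $x$. $\mathcal{C}^n=\langle r_0,\dots,r_{n-1}\mid r_i^2,\ (r_ir_j)^2\ (|i-j|\ge2)\rangle$ acts on the left on flags by $r_ix=x^i$; automorphisms act on the right. A covering is a surjective map of flags preserving all adjacencies. $L^\upsilon=\upsilon^{-1}L\upsilon$. For a subgroup $K\le\mathcal{C}^n$, $\mathcal{C}^n/K$ has flags the left cosets $\omega K$ with $(\omega K)^i=r_i\omega K$. For a flag $y$ of an $m$-premaniplex $\mathcal{Y}$ and $\omega\in\mathcal{C}^m$, $W_\omega(y)$ is the homotopy class of paths from $y$ whose colour sequence $i_1,\dots,i_k$ satisfies $r_{i_k}\cdots r_{i_1}=\omega$; these form the fundamental groupoid $\Pi(\mathcal{Y})$. A voltage assignment $\eta:\Pi(\mathcal{Y})\to\mathcal{C}^n$ satisfies $\eta(W_1W_2)=\eta(W_2)\eta(W_1)$; $(\mathcal{Y},\eta)$ is an $(n,m)$-voltage operator. $\mathcal{X}\rtimes_\eta\mathcal{Y}$ has flags $\mathcal{X}\times\mathcal{Y}$ and $(x,y)^i=(\eta(W_{r_i}(y))x,r_iy)$, $i\in\{0,\dots,m-1\}$. The operator preserves connectivity if $\mathcal{X}\rtimes_\eta\mathcal{Y}$ is connected whenever $\mathcal{X}$ is. Standing convention: $\mathcal{Y}$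 has a spanning tree all of whose darts have trivial voltage. *)

From mathcomp Require Import all_boot.
Set Implicit Arguments. Unset Strict Implicit. Unset Printing Implicit Defensive.

(* The group C^n = < r_0..r_{n-1} | r_i^2, (r_i r_j)^2 (|i-j|>=2) >,       *)
(* represented by words (seq 'I_n) modulo the congruence [ceq] generated   *)
(* by the defining relations.  The word [:: a1; ...; ak] stands for the    *)
(* product r_a1 r_a2 ... r_ak; group product = concatenation, inverse of   *)
(* a word = its reversal (generators are involutions).                     *)
Definition far (n : nat) (i j : 'I_n) : bool := (i.+1 < j) || (j.+1 < i).

Inductive ceq (n : nat) : seq 'I_n -> seq 'I_n -> Prop :=
| ceq_refl w : ceq w w
| ceq_sym w w' : ceq w w' -> ceq w' w
| ceq_trans w1 w2 w3 : ceq w1 w2 -> ceq w2 w3 -> ceq w1 w3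
| ceq_cat a a' b b' : ceq a a' -> ceq b b' -> ceq (a ++ b) (a' ++ b')
| ceq_sq i : ceq [:: i; i] [::]
| ceq_comm i j : far i j -> ceq [:: i; j; i; j] [::].

(* n-premaniplexes: x^i = adj i x; each flag has exactly one i-dart, so    *)
(* adj i is an involution (fixed points = semi-edges).                     *)
Record premaniplex (n : nat) := Premaniplex {
  flag :> Type;
  adj : 'I_n -> flag -> flag;
  adjK : forall i x, adj i (adj i x) = x;
  adj_far : forall i j x, far i j -> adj i (adj j (adj i (adj j x))) = x
}.
Arguments adj {n} X i x : rename.

(* left action of a word: the word [:: a1;..;ak] = r_a1...r_ak acts on x  *)
(* as r_a1 (r_a2 (... (r_ak x))).                                          *)
Definition gact (T : Type) (k : nat) (adjT : 'I_k -> T -> T)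
  (w : seq 'I_k) (t : T) : T := foldr adjT t w.

Definition act (n : nat) (X : premaniplex n) (w : seq 'I_n) (x : X) : X :=
  gact (adj X) w x.
Arguments act {n} X w x.

Definition connected (T : Type) (k : nat) (adjT : 'I_k -> T -> T) : Prop :=
  forall x y : T, exists w : seq 'I_k, gact adjT w x = y.

(* automorphism (acting on the right; written here as a function) *)
Definition is_auto (T : Type) (k : nat) (adjT : 'I_k -> T -> T)
  (g : T -> T) : Prop :=
  bijective g /\ forall i t, g (adjT i t) = adjT i (g t).

(* Voltage assignments.  The homotopy class W_w(y) (paths from y whose     *)
(* colour sequence i_1..i_k satisfies r_ik...r_i1 = w) is identified with  *)
(* the pair (y, w), w in C^m; it ends at w y.  Composition:                *)
(* W_w(y) W_w'(w y) = W_(w' w)(y).  A voltage assignment is                *)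
(* eta : (y, w) |-> eta y w in C^n, well defined on classes, with          *)
(* eta(W1 W2) = eta(W2) eta(W1).                                           *)
Definition voltage (m n : nat) (Y : premaniplex m)
  (eta : Y -> seq 'I_m -> seq 'I_n) : Prop :=
  (forall y w w', ceq w w' -> ceq (eta y w) (eta y w')) /\
  (forall y w w', ceq (eta y (w' ++ w)) (eta (act Y w y) w' ++ eta y w)).

(* standing convention: Y has a spanning tree whose darts all have trivial *)
(* voltage.  A spanning tree is given by a root r, a parent colour p y and *)
(* a depth d y (d r = 0, the parent adj (p y) y of y <> r has depth d y - 1);*)
(* its edges are {y, adj (p y) y}, y <> r, and its darts are the two        *)
(* darts W_{r_(p y)}(y) and W_{r_(p y)}(adj (p y) y) of each such edge.    *)
Definition spanning_tree_trivial (m n : nat) (Y : premaniplex m)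
  (eta : Y -> seq 'I_m -> seq 'I_n) : Prop :=
  exists (r : Y) (p : Y -> 'I_m) (d : Y -> nat),
    d r = 0 /\
    (forall y, y <> r -> (d (adj Y (p y) y)).+1 = d y) /\
    (forall y, y <> r ->
       ceq (eta y [:: p y]) [::] /\ ceq (eta (adj Y (p y) y) [:: p y]) [::]).

Definition prod_adj (n m : nat) (X : premaniplex n) (Y : premaniplex m)
  (eta : Y -> seq 'I_m -> seq 'I_n) (i : 'I_m) (p : X * Y) : X * Y :=
  (act X (eta p.2 [:: i]) p.1, adj Y i p.2).
Arguments prod_adj {n m} X {Y} eta i p.

Definition preserves_connectivity (m n : nat) (Y : premaniplex m)
  (eta : Y -> seq 'I_m -> seq 'I_n) : Prop :=
  forall X : premaniplex n, connected (adj X) -> connected (prod_adj X eta).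

(* Quotients C^n / K for a subgroup K (given as a predicate on words,      *)
(* closed under ceq).  Left cosets: wK = w'K iff w^-1 w' in K.  A map      *)
(* X -> C^n/K is given by a choice of representatives f : X -> words.      *)
(* X covers C^n/K iff there is a surjective adjacency-preserving map,      *)
(* where (wK)^i = r_i w K.                                                 *)
Definition coset_eq (n : nat) (K : seq 'I_n -> Prop) (w w' : seq 'I_n) : Prop :=
  K (rev w ++ w').

Definition covers_quotient (n : nat) (X : premaniplex n)
  (K : seq 'I_n -> Prop) : Prop :=
  exists f : X -> seq 'I_n,
    (forall x i, coset_eq K (f (adj X i x)) (i :: f x)) /\
    (forall w, exists x, coset_eq K (f x) w).

Definition stab (m : nat) (Y : premaniplex m) (y0 : Y) (w : seq 'I_m) : Prop :=
  act Y w y0 = y0.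

(* zeta(L ∩ L^u), where L^u = u^-1 L u, i.e. w ∈ L^u iff u w u^-1 ∈ L,     *)
(* and zeta(w) = eta(W_w(y0)).                                             *)
Definition zeta_sub (m n : nat) (Y : premaniplex m)
  (eta : Y -> seq 'I_m -> seq 'I_n) (y0 : Y) (u : seq 'I_m)
  (v : seq 'I_n) : Prop :=
  exists w, stab y0 w /\ stab y0 (u ++ w ++ rev u) /\ ceq (eta y0 w) v.

(** If the automorphism [g] of [X ⋊_eta Y] sends [(x0, y0)] to [(x1, v y0)],
    then every word fixing [x0] lies in [zeta(L ∩ L^(v^-1))]: since [zeta] is
    onto [C^n] (apply connectivity preservation to the universal premaniplex
    [C^n]), such a word is [zeta(om)] with [om ∈ L], and then [om] fixes
    [(x0, y0)], hence also its image [(x1, v y0)] under [g].  So [X] covers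
    [Z_(v^-1)], and the hypothesis forces [v y0 = y0].  Connectivity of the
    product then shows that [g] preserves every [Y]-coordinate, and its action
    on the [X]-coordinates commutes with every [zeta(om)], hence with every
    generator of [C^n]. *)

From mathcomp Require Import all_boot.
From Stdlib Require Import ClassicalEpsilon FunctionalExtensionality PropExtensionality.

Set Implicit Arguments.
Unset Strict Implicit.
Unset Printing Implicit Defensive.

Section Words.
Variable n : nat.
Implicit Types (i j : 'I_n) (u v w : seq 'I_n).

Lemma ceq_cons i v w : ceq v w -> ceq (i :: v) (i :: w).
Proof. exact: ceq_cat (ceq_refl [:: i]). Qed.

Lemma ceq_ii i w : ceq (i :: i :: w) w.
Proof. exact: ceq_cat (ceq_sq i) (ceq_refl w). Qed.

Lemma ceq_far i j w : far i j -> ceq (i :: j :: i :: j :: w) w.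
Proof. by move=> fij; apply: ceq_cat (ceq_comm fij) (ceq_refl w). Qed.

Lemma ceq_revl u : ceq (rev u ++ u) [::].
Proof.
elim: u => [|i u IHu] /=; first exact: ceq_refl.
rewrite rev_cons -cats1 -catA /=.
exact: ceq_trans (ceq_cat (ceq_refl _) (ceq_ii i u)) IHu.
Qed.

Lemma ceq_revr u : ceq (u ++ rev u) [::].
Proof. by have := ceq_revl (rev u); rewrite revK. Qed.

Lemma ceq_catl u v w : ceq (u ++ v) (u ++ w) -> ceq v w.
Proof.
have cancel_u t : ceq (rev u ++ u ++ t) t.
  by rewrite catA; apply: ceq_cat (ceq_revl u) (ceq_refl t).
move=> e; apply: ceq_trans (ceq_sym (cancel_u v)) _.
exact: ceq_trans (ceq_cat (ceq_refl _) e) (cancel_u w).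
Qed.

Section Action.
Variable X : premaniplex n.
Implicit Type x : X.

Lemma act_cons i w x : act X (i :: w) x = adj X i (act X w x).
Proof. by []. Qed.

Lemma act_cat u v x : act X (u ++ v) x = act X u (act X v x).
Proof. exact: foldr_cat. Qed.

Lemma act_ceq u v x : ceq u v -> act X u x = act X v x.
Proof.
move=> e; elim: e x => {u v} [w|w w' _ IH|w1 w2 w3 _ IH1 _ IH2|a a' b b' _ IH1 _ IH2|i|i j fij] x.
- by [].
- by rewrite IH.
- by rewrite IH1 IH2.
- by rewrite !act_cat IH1 IH2.
- exact: adjK.
- exact: adj_far.
Qed.

Lemma act_revK u x : act X (rev u) (act X u x) = x.
Proof. by rewrite -act_cat (act_ceq x (ceq_revl u)). Qed.

Lemma act_Krev u x : act X u (act X (rev u) x) = x.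
Proof. by rewrite -act_cat (act_ceq x (ceq_revr u)). Qed.

Lemma stab_covers_quotient x0 (K : seq 'I_n -> Prop) :
  connected (adj X) -> (forall w, act X w x0 = x0 -> K w) -> covers_quotient X K.
Proof.
move=> CX stabK.
have [f fP] : exists f : X -> seq 'I_n, forall x, act X (f x) x0 = x := choice _ (CX x0).
exists f; split => [x i|w]; last exists (act X w x0); apply: stabK; rewrite act_cat.
- by rewrite act_cons fP -{2}(fP (adj X i x)) act_revK.
- by rewrite -{2}(fP (act X w x0)) act_revK.
Qed.

End Action.

Lemma gact_auto (T : Type) (adjT : 'I_n -> T -> T) (g : T -> T) w t :
  (forall i t, g (adjT i t) = adjT i (g t)) -> g (gact adjT w t) = gact adjT w (g t).
Proof. by move=> gC; elim: w => //= i w <-; rewrite gC. Qed.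

End Words.

Lemma bij_fst_prod (A B : Type) (a : A -> A) (g : A * B -> A * B) (b : B) :
  bijective g -> (forall x y, g (x, y) = (a x, y)) -> bijective a.
Proof.
case=> h gK hK ga; exists (fun x => (h (x, b)).1) => x; first by rewrite -ga gK.
by case e: (h (x, b)) => [x' y'] /=; have := hK (x, b); rewrite e ga => -[].
Qed.

Section Universal.
Variable n : nat.
Implicit Types (i : 'I_n) (v w : seq 'I_n).

(* A flag of the universal premaniplex [C^n] is the class of a word [w],
   encoded as the predicate [ceq w]. *)
Definition univ_flag := {P : seq 'I_n -> Prop | exists w, P = ceq w}.

Definition word_class w : univ_flag := exist _ (ceq w) (ex_intro _ w erefl).

Lemma univ_flag_eq (P Q : univ_flag) : sval P = sval Q -> P = Q.
Proof.
by case: P Q => P hP [Q hQ] /= ePQ; subst Q; congr exist; apply: proof_irrelevance.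
Qed.

Lemma word_classP (P : univ_flag) : exists w, P = word_class w.
Proof. by case: P => P [w eP]; exists w; apply: univ_flag_eq. Qed.

Lemma word_class_eq v w : word_class v = word_class w <-> ceq v w.
Proof.
split=> [/(congr1 sval) /= ->|e]; first exact: ceq_refl.
apply: univ_flag_eq; apply: functional_extensionality => u.
apply: propositional_extensionality.
by split=> h; [apply: ceq_trans (ceq_sym e) h | apply: ceq_trans e h].
Qed.

Lemma ceq_cons_class i w : (fun v => ceq w (i :: v)) = ceq (i :: w).
Proof.
apply: functional_extensionality => v; apply: propositional_extensionality; split=> h.
- exact: ceq_trans (ceq_cons i h) (ceq_ii i v).
- exact: ceq_trans (ceq_sym (ceq_ii i w)) (ceq_cons i h).
Qed.

Lemma univ_adj_class i (P : univ_flag) : exists w, (fun v => sval P (i :: v)) = ceq w.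
Proof. by have [w ->] := word_classP P; exists (i :: w); apply: ceq_cons_class. Qed.

Definition univ_adj i (P : univ_flag) : univ_flag := exist _ _ (univ_adj_class i P).

Lemma univ_adj_word_class i w : univ_adj i (word_class w) = word_class (i :: w).
Proof. exact/univ_flag_eq/ceq_cons_class. Qed.

Lemma univ_adjK i P : univ_adj i (univ_adj i P) = P.
Proof.
have [w ->] := word_classP P; rewrite !univ_adj_word_class.
exact/word_class_eq/ceq_ii.
Qed.

Lemma univ_adj_far i j P : far i j -> univ_adj i (univ_adj j (univ_adj i (univ_adj j P))) = P.
Proof.
move=> fij; have [w ->] := word_classP P; rewrite !univ_adj_word_class.
exact/word_class_eq/ceq_far.
Qed.

Definition universal : premaniplex n := Premaniplex univ_adjK univ_adj_far.

Lemma act_word_class u w : act universal u (word_class w) = word_class (u ++ w).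
Proof. by elim: u => // i u IHu; rewrite act_cons IHu; apply: univ_adj_word_class. Qed.

Lemma universal_connected : connected (adj universal).
Proof.
move=> P Q; have [v ->] := word_classP P; have [w ->] := word_classP Q.
exists (w ++ rev v); rewrite [gact _ _ _]act_word_class -catA; apply/word_class_eq.
by have := ceq_cat (ceq_refl w) (ceq_revl v); rewrite cats0.
Qed.

End Universal.

Section Voltage.
Variables (n m : nat) (Y : premaniplex m) (eta : Y -> seq 'I_m -> seq 'I_n).
Hypothesis etaV : voltage eta.

Lemma voltage_nil y : ceq (eta y [::]) [::].
Proof.
apply/ceq_sym/(@ceq_catl _ (eta y [::])); rewrite cats0.
exact: etaV.2 y [::] [::].
Qed.

Lemma gact_prod (X : premaniplex n) w x y :
  gact (prod_adj X eta) w (x, y) = (act X (eta y w) x, act Y w y).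
Proof.
elim: w => [|i w IHw] /=; first by rewrite (act_ceq x (voltage_nil y)).
rewrite IHw /prod_adj /= -act_cat; congr pair.
exact/act_ceq/ceq_sym/(etaV.2 y w [:: i]).
Qed.

Lemma zeta_onto y0 : preserves_connectivity eta ->
  forall w, exists2 om, stab y0 om & ceq (eta y0 om) w.
Proof.
move=> PC w.
have [om] := PC _ (@universal_connected n) (word_class [::], y0) (word_class w, y0).
rewrite gact_prod act_word_class cats0 => -[e st].
by exists om; [exact: st | rewrite e; apply: ceq_refl].
Qed.

End Voltage.

Section ProductAutomorphism.
Variables (n m : nat) (X : premaniplex n) (Y : premaniplex m).
Variables (eta : Y -> seq 'I_m -> seq 'I_n) (x0 : X) (y0 : Y).
Hypotheses (CX : connected (adj X)) (etaV : voltage eta) (PC : preserves_connectivity eta).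
Variable g : X * Y -> X * Y.
Hypothesis g_auto : is_auto (prod_adj X eta) g.

Local Notation XY := (prod_adj X eta).

Lemma auto_gact w p : g (gact XY w p) = gact XY w (g p).
Proof. exact: gact_auto g_auto.2. Qed.

Lemma auto_stab_zeta_sub v x1 : g (x0, y0) = (x1, act Y v y0) ->
  forall w, act X w x0 = x0 -> zeta_sub eta y0 (rev v) w.
Proof.
move=> gx0 w wx0; have [om omL omw] := zeta_onto etaV y0 PC w.
exists om; split=> //; split=> //.
have om_x0 : gact XY om (x0, y0) = (x0, y0).
  by rewrite gact_prod // omL (act_ceq x0 omw) wx0.
have := auto_gact om (x0, y0); rewrite om_x0 gx0 gact_prod // => -[_ omv].
by rewrite /stab revK !act_cat -omv act_revK.
Qed.

Hypothesis noncover :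
  forall u, ~ stab y0 u -> ~ covers_quotient X (zeta_sub eta y0 u).

Lemma auto_base_snd : (g (x0, y0)).2 = y0.
Proof.
case gx0: (g (x0, y0)) => [x1 y1] /=.
have [v] := PC CX (x0, y0) (x1, y1); rewrite gact_prod // => -[_ vy0].
rewrite -vy0 in gx0 *.
have vL : stab y0 (rev v).
  apply: NNPP => notL; apply: (noncover notL).
  exact: stab_covers_quotient CX (auto_stab_zeta_sub gx0).
by rewrite -{1}vL act_Krev.
Qed.

Section FixedBase.
Hypothesis g_base : (g (x0, y0)).2 = y0.

Lemma auto_snd p : (g p).2 = p.2.
Proof.
case: p => x y; have [w <-] := PC CX (x0, y0) (x, y).
by rewrite auto_gact [g _]surjective_pairing g_base !gact_prod.
Qed.

Definition auto_fst x := (g (x, y0)).1.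

Lemma auto_fst_pair x : g (x, y0) = (auto_fst x, y0).
Proof. by rewrite [LHS]surjective_pairing auto_snd. Qed.

Lemma auto_fst_adj i x : auto_fst (adj X i x) = adj X i (auto_fst x).
Proof.
have [om omL omi] := zeta_onto etaV y0 PC [:: i].
have := auto_gact om (x, y0).
by rewrite auto_fst_pair !gact_prod // omL !(act_ceq _ omi) auto_fst_pair => -[].
Qed.

Lemma auto_fst_act w x : auto_fst (act X w x) = act X w (auto_fst x).
Proof. exact: gact_auto auto_fst_adj. Qed.

Lemma auto_prod x y : g (x, y) = (auto_fst x, y).
Proof.
have [w] := PC CX (x, y0) (x, y); rewrite gact_prod // => -[wx wy].
have := auto_gact w (x, y0).
by rewrite !gact_prod // wx wy auto_fst_pair gact_prod // -auto_fst_act wx wy.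
Qed.

End FixedBase.

End ProductAutomorphism.

Theorem theorem5p7 (n m : nat) (X : premaniplex n) (x0 : X)
  (Y : premaniplex m) (eta : Y -> seq 'I_m -> seq 'I_n) (y0 : Y) :
  connected (adj X) ->
  voltage eta ->
  spanning_tree_trivial eta ->
  preserves_connectivity eta ->
  (forall u : seq 'I_m, ~ stab y0 u -> ~ covers_quotient X (zeta_sub eta y0 u)) ->
  forall g : X * Y -> X * Y, is_auto (prod_adj X eta) g ->
  exists a : X -> X, is_auto (adj X) a /\ forall x y, g (x, y) = (a x, y).
Proof.
move=> CX etaV _ PC noncover g g_auto.
have g_base := auto_base_snd x0 CX etaV PC g_auto noncover.
have g_prod := auto_prod CX etaV PC g_auto g_base.
exists (auto_fst y0 g); split=> //; split.
- exact: bij_fst_prod g_auto.1 g_prod.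
- exact: (auto_fst_adj CX etaV PC g_auto g_base).
Qed.
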